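(* Let $n\geqslant 2$, $N=\{1,\ldots,n\}$ and $\alpha\in\mathbb{R}$. Then $\mathscr{BG}_\alpha(n)$, viewed as a subset of $\mathbb{R}^{2^N\setminus\{\varnothing,N\}}$, is a $(2^n-2)$-dimensional affine cone (a cone translated by a point) which is not pointed. Its lineality space has dimension $n-1$, with basis $(w_i)_{i\in N\setminus\{n\}}$, where \[ w_i=\sum_{S\ni i,\ S\not\ni n}\delta_S-\sum_{S\not\ni i,\ S\ni n}\delta_S. \] The maximal affine subspace contained in $\mathscr{BG}_\alpha(n)$ is the set of $v$ satisfying \[ \sum_{i\in N}v(\{i\})=\alpha,\qquad v(S)+\sum_{i\in N\setminus S}v(\{i\})=\alpha\ \text{ for all } S\subsetneq N,\ |S|>1. \]
   Context: A game on $N$ is a map $v:2^N\to\mathbb{R}$ with $v(\varnothing)=0$. For nonempty $S$, $\delta_S(T)=1$ if $T=S$ and $0$ otherwise (here restricted to coordinates $T\neq\varnothing,N$). A collection $\mathscr{B}$ of nonempty subsets of $N$ is balanced if there exist positive weights $(\lambda_S)_{S\in\mathscr{B}}$ with $\sum_{S\in\mathscr{B},S\ni i}\lambda_S=1$ for all $i\in N$; minimal balanced if no proper subcollection is balanced, with unique weights $\lambda^{\mathscr{B}}_S$. $\mathfrak{B}^*(n)$ is the set of minimal balanced collections on $N$ other than $\{N\}$. For $\alpha\in\mathbb{R}$, $\mathscr{BG}_\alpha(n)$ is the set of games $v$ with $v(N)=\alpha$ and $\sum_{S\in\mathscr{B}}\lambda^{\mathscr{B}}_S v(S)\leqslant\alpha$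 for all $\mathscr{B}\in\mathfrak{B}^*(n)$; since $v(N)$ is fixed, $v$ is identified with its vector of values on $2^N\setminus\{\varnothing,N\}$. *)

From HB Require Import structures.
From mathcomp Require Import all_boot all_order all_algebra.
From mathcomp Require Import reals.

Set Implicit Arguments.
Unset Strict Implicit.
Unset Printing Implicit Defensive.

Import Order.TTheory GRing.Theory Num.Theory.
Local Open Scope ring_scope.

(* Players N = {1,...,n} are represented by 'I_n = {0,...,n-1};
   player "n" of the paper is the ordinal with value n.-1. *)

Definition gcoord (n : nat) : finType :=
  {S : {set 'I_n} | (S != set0) && (S != setT)}.

(* A game with v(N) = alpha, identified with its vector of values on gcoord n. *)
Notation gvec R n := {ffun gcoord n -> R^o}.

Definition gval (R : realType) (n : nat) (alpha : R) (x : gvec R n)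
  (S : {set 'I_n}) : R :=
  if @insub _ (fun S : {set 'I_n} => (S != set0) && (S != setT)) (gcoord n) S
     is Some s then x s
  else if S == set0 then 0 else alpha.

Definition balancing_weights (R : realType) (n : nat)
  (B : {set {set 'I_n}}) (lam : {set 'I_n} -> R) : Prop :=
  (forall S, S \in B -> 0 < lam S) /\
  (forall i : 'I_n, \sum_(S in B | i \in S) lam S = 1).

Definition balanced (R : realType) (n : nat) (B : {set {set 'I_n}}) : Prop :=
  set0 \notin B /\ exists lam : {set 'I_n} -> R, balancing_weights B lam.

Definition minimal_balanced (R : realType) (n : nat) (B : {set {set 'I_n}})
  : Prop :=
  balanced R B /\ forall B' : {set {set 'I_n}}, B' \proper B -> ~ balanced R B'.

Definition Bstar (R : realType) (n : nat) (B : {set {set 'I_n}}) : Prop :=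
  minimal_balanced R B /\ B != [set setT].

(* The weights of a
   minimal balanced collection are unique, so quantifying over all balancing
   weight systems of B is the same as using lambda^B. *)
Definition BG (R : realType) (n : nat) (alpha : R) (x : gvec R n) : Prop :=
  forall B : {set {set 'I_n}}, Bstar R B ->
  forall lam : {set 'I_n} -> R, balancing_weights B lam ->
  \sum_(S in B) lam S * gval alpha x S <= alpha.

Definition is_cone (R : realType) (V : lmodType R) (C : V -> Prop) : Prop :=
  C 0 /\ (forall c d, C c -> C d -> C (c + d)) /\
  (forall (t : R) c, 0 <= t -> C c -> C (t *: c)).

Definition is_affine_cone (R : realType) (V : lmodType R) (P : V -> Prop)
  : Prop :=
  exists (x0 : V) (C : V -> Prop), is_cone C /\
    forall x, P x <-> exists c, C c /\ x = x0 + c.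

Definition is_apex (R : realType) (V : lmodType R) (P : V -> Prop) (x0 : V)
  : Prop :=
  is_cone (fun c => P (x0 + c)).

Definition lineality (R : realType) (V : lmodType R) (P : V -> Prop) (d : V)
  : Prop :=
  forall x (t : R), P x -> P (x + t *: d).

Definition is_affine_subspace (R : realType) (V : lmodType R) (A : V -> Prop)
  : Prop :=
  (exists x, A x) /\
  (forall x y (t : R), A x -> A y -> A ((1 - t) *: x + t *: y)).

Definition lin_indep (R : realType) (V : lmodType R) (I : finType)
  (b : I -> V) : Prop :=
  forall c : I -> R, \sum_(i : I) c i *: b i = 0 -> forall i, c i = 0.

Definition is_last (n : nat) (j : 'I_n) : bool := val j == n.-1.

Definition contains_last (n : nat) (S : {set 'I_n}) : bool :=
  [exists j in S, is_last j].

Definition player_lt_n (n : nat) (i : 'I_n.-1) : 'I_n :=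
  widen_ord (leq_pred n) i.

Definition w (R : realType) (n : nat) (i : 'I_n) : gvec R n :=
  [ffun s : gcoord n =>
     (((i \in val s) && ~~ contains_last (val s)))%:R
   - (((i \notin val s) && contains_last (val s)))%:R].

Definition Mset (R : realType) (n : nat) (alpha : R) (x : gvec R n) : Prop :=
  \sum_(i : 'I_n) gval alpha x [set i] = alpha /\
  forall S : {set 'I_n}, S \proper setT -> (1 < #|S|)%N ->
    gval alpha x S + \sum_(i in ~: S) gval alpha x [set i] = alpha.

From HB Require Import structures.
From mathcomp Require Import all_boot all_order all_algebra.
From mathcomp Require Import reals.
Import Order.TTheory GRing.Theory Num.Theory.
Local Open Scope ring_scope.

Set Implicit Arguments.
Unset Strict Implicit.
Unset Printing Implicit Defensive.

(* A balanced sum v |-> \sum_(S in B) lam_S v(S) is an affine function of the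
   vector of values, and it equals v(N) = alpha on every additive game
   v(S) = \sum_(i in S) v({i}).  Hence BG_alpha is the translate, by any
   additive game (e.g. the equal split), of the convex cone of vectors whose
   balanced sums are all nonpositive; this cone contains every -delta_S, so it
   is full-dimensional.  Conversely, the partitions {{i} | i in N} and
   {S} u {{i} | i notin S} are minimal balanced and their balanced sums are
   exactly the equations defining M, so a game all of whose balanced sums equal
   alpha is additive, i.e. lies in M.  Along a line through a point of M the
   balanced sums are affine and equal alpha at that point, so if the line stays
   in BG_alpha on both sides they equal alpha everywhere on it.  This yields
   both the maximality of M and the lineality space, namely the additive games
   with v(N) = 0, which are spanned by the w_i. *)

Section VectorFacts.
Variables (R : realType) (V : lmodType R).

Lemma apex_affine_cone (P : V -> Prop) x0 : is_apex P x0 -> is_affine_cone P.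
Proof.
move=> apex; exists x0, (fun c => P (x0 + c)); split=> // x.
split=> [Px | [c [Pc ->]] //]; by exists (x - x0); rewrite addrC subrK.
Qed.

Lemma lin_indepN (I : finType) (b : I -> V) :
  lin_indep b -> lin_indep (fun i => - b i).
Proof.
move=> indep c; under eq_bigr => i _ do rewrite scalerN -scaleNr.
by move=> /indep c0 i; apply/oppr_inj; rewrite oppr0 c0.
Qed.

Lemma lin_indep_neq0 (I : finType) (b : I -> V) i : lin_indep b -> b i != 0.
Proof.
move=> indep; apply/eqP => bi0.
have := indep (fun j => (j == i)%:R); rewrite (bigD1 i) //= bi0 scaler0 add0r.
rewrite big1 => [/(_ erefl i)|j /negbTE ->]; last by rewrite scale0r.
by rewrite eqxx => /eqP; rewrite oner_eq0.
Qed.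

End VectorFacts.

Section Games.
Variables (R : realType) (n : nat).
Implicit Types (al t : R) (x y c d : gvec R n) (S : {set 'I_n}).
Implicit Types (B : {set {set 'I_n}}) (lam : {set 'I_n} -> R).

Lemma gval_eq_game al x (v : {set 'I_n} -> R) :
  (forall s, x s = v (val s)) -> v set0 = 0 -> v setT = al -> gval al x =1 v.
Proof.
move=> xv v0 vT S; rewrite /gval; case: insubP => [s _ <-|] //.
rewrite negb_and !negbK => /orP[]/eqP->; rewrite ?eqxx //.
by case: ifP => [/eqP ->|].
Qed.

Lemma gval_coord al x (s : gcoord n) : gval al x (val s) = x s.
Proof. by rewrite /gval valK. Qed.

Lemma gval_set0 al x : gval al x set0 = 0.
Proof. by rewrite /gval; case: insubP => [s|]; rewrite ?eqxx. Qed.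

Lemma gvalD al x c S : gval al (x + c) S = gval al x S + gval 0 c S.
Proof.
rewrite /gval; case: insub => [s|]; first by rewrite ffunE.
by case: ifP; rewrite addr0.
Qed.

Lemma gval0Z t c S : gval 0 (t *: c) S = t * gval 0 c S.
Proof.
rewrite /gval; case: insub => [s|]; first by rewrite ffunE.
by case: ifP; rewrite mulr0.
Qed.

Lemma gval00 S : gval 0 (0 : gvec R n) S = 0.
Proof. by rewrite -(scale0r 0) gval0Z mul0r. Qed.

Lemma gval0_sum (I : finType) (k : I -> R) (y : I -> gvec R n) S :
  gval 0 (\sum_i k i *: y i) S = \sum_i k i * gval 0 (y i) S.
Proof.
rewrite (big_morph (gval 0 ^~ S) (fun x c => gvalD 0 x c S) (gval00 S)).
by apply: eq_bigr => i _; rewrite gval0Z.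
Qed.

Lemma gval_comb al t x y S :
  gval al ((1 - t) *: x + t *: y) S = (1 - t) * gval al x S + t * gval al y S.
Proof.
rewrite /gval; case: insub => [s|]; first by rewrite !ffunE.
by case: ifP => _; rewrite ?mulr0 ?addr0 // mulrBl mul1r subrK.
Qed.

Lemma gval0_le0 c S : (forall s, c s <= 0) -> gval 0 c S <= 0.
Proof. by move=> c_le0; rewrite /gval; case: insub => [s|] //; case: ifP. Qed.

Definition balanced_sum B lam al x : R := \sum_(S in B) lam S * gval al x S.

Lemma BGP al x : BG al x <->
  forall B, Bstar R B -> forall lam, balancing_weights B lam ->
  balanced_sum B lam al x <= al.
Proof. by []. Qed.

Lemma balanced_sumD B lam al x c :
  balanced_sum B lam al (x + c) =
  balanced_sum B lam al x + balanced_sum B lam 0 c.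
Proof.
rewrite /balanced_sum -big_split.
by apply: eq_bigr => S _; rewrite gvalD mulrDr.
Qed.

Lemma balanced_sum0_sum B lam (I : finType) (k : I -> R) (y : I -> gvec R n) :
  balanced_sum B lam 0 (\sum_i k i *: y i) =
  \sum_i k i * balanced_sum B lam 0 (y i).
Proof.
rewrite /balanced_sum; under eq_bigr => S _ do rewrite gval0_sum mulr_sumr.
rewrite exchange_big; apply: eq_bigr => i _; rewrite mulr_sumr.
by apply: eq_bigr => S _; rewrite mulrCA.
Qed.

Lemma balanced_sum0Z B lam t c :
  balanced_sum B lam 0 (t *: c) = t * balanced_sum B lam 0 c.
Proof.
rewrite /balanced_sum mulr_sumr.
by apply: eq_bigr => S _; rewrite gval0Z mulrCA.
Qed.

Lemma balanced_sum_comb B lam al t x y :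
  balanced_sum B lam al ((1 - t) *: x + t *: y) =
  (1 - t) * balanced_sum B lam al x + t * balanced_sum B lam al y.
Proof.
rewrite /balanced_sum !mulr_sumr -big_split; apply: eq_bigr => S _.
by rewrite gval_comb mulrDr (mulrCA (lam S) (1 - t)) (mulrCA (lam S) t).
Qed.

Lemma balanced_sum0_le0 B lam c : balancing_weights B lam ->
  (forall s, c s <= 0) -> balanced_sum B lam 0 c <= 0.
Proof.
move=> [lam_gt0 _] c_le0; rewrite -oppr_ge0 -sumrN; apply: sumr_ge0 => S SB.
rewrite -mulrN mulr_ge0 ?oppr_ge0 ?gval0_le0 //; exact/ltW/lam_gt0.
Qed.

Lemma lineality_of_balanced_sum0 al d :
  (forall B lam, balancing_weights B lam -> balanced_sum B lam 0 d = 0) ->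
  lineality (BG al) d.
Proof.
move=> d0 x t BGx; apply/BGP => B BB lam w_lam.
by rewrite balanced_sumD balanced_sum0Z d0 // mulr0 addr0; apply: BGx.
Qed.

Definition additive_game (v : {set 'I_n} -> R) : Prop :=
  forall S, v S = \sum_(i in S) v [set i].

Lemma balanced_sum_additive B lam (v : {set 'I_n} -> R) :
  additive_game v -> balancing_weights B lam ->
  \sum_(S in B) lam S * v S = \sum_i v [set i].
Proof.
move=> vE [_ lam1]; under eq_bigr => S _ do rewrite vE mulr_sumr.
rewrite (exchange_big_dep predT) //=; apply: eq_bigr => i _.
by rewrite -mulr_suml lam1 mul1r.
Qed.

Lemma sumr_setC (F : 'I_n -> R) S :
  \sum_(i in S) F i + \sum_(i in ~: S) F i = \sum_i F i.
Proof.
rewrite [RHS](bigID (mem S)) /=; congr (_ + _).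
by apply: eq_bigl => i; rewrite in_setC.
Qed.

Lemma partition_balancing_weights B :
  partition B [set: 'I_n] -> balancing_weights B (fun _ => 1 : R).
Proof.
move=> partB; split=> [S _|i]; first exact: ltr01.
have iB : i \in cover B by rewrite (cover_partition partB) inE.
rewrite (big_pred1 (pblock B i)) // => S /=; apply/andP/eqP => [[SB iS]|->].
  by rewrite (def_pblock (partition_trivIset partB) SB iS).
by rewrite pblock_mem // mem_pblock.
Qed.

Lemma partition_Bstar B :
  partition B [set: 'I_n] -> setT \notin B -> Bstar R B.
Proof.
move=> partB notTB; split; last by apply: contraNneq notTB => ->; rewrite set11.
split; first by split; [rewrite (partition0 partB) | exists (fun _ => 1);
  exact: partition_balancing_weights].
move=> B' /properP[subB' [T TB notTB']] [_ [lam [_ lam1]]].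
have /set0Pn[i iT] := partition_neq0 partB TB.
have := lam1 i; rewrite big_pred0 => [/eqP|S]; first by rewrite eq_sym oner_eq0.
apply/andP => -[SB' iS]; have tiB := partition_trivIset partB.
have SB := subsetP subB' S SB'.
by move: notTB'; rewrite -(def_pblock tiB TB iT) (def_pblock tiB SB iS) SB'.
Qed.

Lemma singletons_partition (A : {set 'I_n}) :
  partition [set [set i] | i in A] A.
Proof.
apply/and3P; split.
- rewrite cover_imset; apply/eqP/setP => j.
  by apply/bigcupP/idP => [[i iA /set1P -> //]|jA]; exists j; rewrite ?set11.
- apply/trivIsetP => _ _ /imsetP[i _ ->] /imsetP[j _ ->] neq_ij.
  by rewrite disjoints1 in_set1; apply: contraNneq neq_ij => ->.
- by apply/imsetP => -[i _ /setP/(_ i)]; rewrite !inE eqxx.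
Qed.

Lemma coalition_partition S : S != set0 ->
  partition (S |: [set [set i] | i in ~: S]) [set: 'I_n].
Proof.
move=> S0; rewrite -(setUCr S); apply: partitionU1 => //.
  exact: singletons_partition.
by rewrite -subsets_disjoint.
Qed.

Lemma balanced_sum_singletons (A : {set 'I_n}) al x :
  balanced_sum [set [set i] | i in A] (fun _ => 1) al x =
  \sum_(i in A) gval al x [set i].
Proof.
rewrite /balanced_sum big_imset => [|i j _ _]; last exact: set1_inj.
by apply: eq_bigr => i _; rewrite mul1r.
Qed.

Lemma balanced_sum_coalition S al x : (1 < #|S|)%N ->
  balanced_sum (S |: [set [set i] | i in ~: S]) (fun _ => 1) al x =
  gval al x S + \sum_(i in ~: S) gval al x [set i].
Proof.
move=> cardS; rewrite /balanced_sum big_setU1 ?mul1r; last first.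
  by apply/imsetP => -[i _ Si]; move: cardS; rewrite Si cards1.
by rewrite -balanced_sum_singletons.
Qed.

Definition delta (s : gcoord n) : gvec R n := [ffun s' => (s' == s)%:R].

Lemma lin_indep_delta (I : finType) (f : I -> gcoord n) :
  injective f -> lin_indep (fun k => delta (f k)).
Proof.
move=> f_inj c /ffunP sum0 k; move: (sum0 (f k)).
rewrite sum_ffunE ffunE (bigD1 k) //= big1 => [|j neq_jk]; last first.
  by rewrite !ffunE (inj_eq f_inj) eq_sym (negbTE neq_jk) scaler0.
by rewrite !ffunE eqxx addr0 => /eqP; rewrite scaler_eq0 oner_eq0 orbF => /eqP.
Qed.

End Games.

Section AtLeastOnePlayer.
Variables (R : realType) (m : nat).
Implicit Types (al : R) (x c d : gvec R m.+1) (S : {set 'I_m.+1}).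
Implicit Types (B : {set {set 'I_m.+1}}) (lam : {set 'I_m.+1} -> R).

Lemma setT_neq0 : [set: 'I_m.+1] != set0.
Proof. by apply/set0Pn; exists ord0. Qed.

Lemma card_gcoord : #|gcoord m.+1| = (2 ^ m.+1 - 2)%N.
Proof.
rewrite card_sig.
have -> : #|[pred S : {set 'I_m.+1} | (S != set0) && (S != setT)]| =
          #|~: [set set0; [set: 'I_m.+1]]|.
  by apply: eq_card => S; rewrite !inE negb_or.
rewrite cardsCs setCK cards2 eq_sym setT_neq0.
by rewrite -cardsT -powersetT card_powerset cardsT card_ord.
Qed.

Lemma gval_setT al x : gval al x setT = al.
Proof.
rewrite /gval; case: insubP => [s|]; first by rewrite eqxx andbF.
by rewrite (negbTE setT_neq0).
Qed.

Lemma Mset_additive al x : Mset al x <-> additive_game (gval al x).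
Proof.
split=> [[sum1 sumC] S|addx].
  have [S0|S2|/eqP/cards1P[i ->]] := ltngtP #|S| 1; last by rewrite big_set1.
    move: S0; rewrite ltnS leqn0 cards_eq0 => /eqP ->.
    by rewrite big_set0 gval_set0.
  have [->|neq_ST] := eqVneq S setT.
    by rewrite gval_setT -{1}sum1; apply: eq_bigl => i; rewrite inE.
  apply: (addIr (\sum_(i in ~: S) gval al x [set i])).
  by rewrite sumC ?properT // sumr_setC sum1.
have sum1 : \sum_i gval al x [set i] = al.
  by rewrite -[RHS](gval_setT al x) addx; apply: eq_bigl => i; rewrite inE.
by split=> // S _ _; rewrite addx sumr_setC.
Qed.

Lemma Mset_balanced_sum al x B lam : Mset al x ->
  balancing_weights B lam -> balanced_sum B lam al x = al.
Proof.
move=> /[dup] -[sum1 _] /Mset_additive addx w_lam.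
by rewrite /balanced_sum (balanced_sum_additive addx w_lam) sum1.
Qed.

Lemma Mset_BG al x : Mset al x -> BG al x.
Proof. by move=> xM; apply/BGP => B _ lam w_lam; rewrite Mset_balanced_sum. Qed.

Lemma BG_translateE al x0 c : Mset al x0 -> BG al (x0 + c) <->
  forall B, Bstar R B -> forall lam, balancing_weights B lam ->
  balanced_sum B lam 0 c <= 0.
Proof.
move=> x0M; have shiftE B lam : balancing_weights B lam ->
    (balanced_sum B lam al (x0 + c) <= al) = (balanced_sum B lam 0 c <= 0).
  by move=> w_lam; rewrite balanced_sumD (Mset_balanced_sum x0M w_lam) gerDl.
split=> [BGc B BB lam w_lam|BGc]; first by rewrite -shiftE // BGc.
by apply/BGP => B BB lam w_lam; rewrite shiftE // BGc.
Qed.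

Lemma Mset_apex al x0 : Mset al x0 -> is_apex (BG al) x0.
Proof.
move=> x0M; split; first by rewrite addr0; exact: Mset_BG.
split=> [c d /(BG_translateE _ x0M) BGc /(BG_translateE _ x0M) BGd|t c t_ge0].
  apply/(BG_translateE _ x0M) => B BB lam w_lam.
  rewrite balanced_sumD -[0 in X in _ <= X](addr0 0).
  exact: lerD (BGc _ BB _ w_lam) (BGd _ BB _ w_lam).
move=> /(BG_translateE _ x0M) BGc.
apply/(BG_translateE _ x0M) => B BB lam w_lam.
by rewrite balanced_sum0Z mulr_ge0_le0 ?BGc.
Qed.

Definition equal_split al : gvec R m.+1 :=
  [ffun s : gcoord m.+1 => \sum_(i in val s) al / m.+1%:R : R^o].

Lemma equal_split_Mset al : Mset al (equal_split al).
Proof.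
have total : \sum_(i < m.+1) al / m.+1%:R = al.
  by rewrite sumr_const card_ord -[LHS]mulr_natr divfK // pnatr_eq0.
have valE : gval al (equal_split al) =1 fun S => \sum_(i in S) al / m.+1%:R.
  apply: gval_eq_game => [s||]; rewrite ?ffunE ?big_set0 //.
  by rewrite -[RHS]total; apply: eq_bigl => i; rewrite inE.
apply/Mset_additive => S; rewrite valE.
by apply: eq_bigr => i _; rewrite valE big_set1.
Qed.

Lemma Mset_affine_subspace al : is_affine_subspace (Mset (n := m.+1) al).
Proof.
split; first by exists (equal_split al); apply: equal_split_Mset.
move=> x y t /Mset_additive addx /Mset_additive addy; apply/Mset_additive => S.
rewrite gval_comb addx addy !mulr_sumr -big_split.
by apply: eq_bigr => i _; rewrite gval_comb.
Qed.

Lemma BG_sub_delta al x0 s : Mset al x0 -> BG al (x0 - delta R s).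
Proof.
move=> x0M; apply/(BG_translateE _ x0M) => B _ lam w_lam.
by apply: balanced_sum0_le0 => // s'; rewrite !ffunE oppr_le0.
Qed.


Lemma contains_lastE S : contains_last S = (ord_max \in S).
Proof.
apply/existsP/idP => [[j /andP[jS /eqP jmax]]|maxS].
  by rewrite (_ : ord_max = j) //; apply: val_inj.
by exists ord_max; rewrite maxS /is_last /=.
Qed.

Lemma gval_w i S : gval 0 (w R i) S = (i \in S)%:R - (ord_max \in S)%:R.
Proof.
apply: (gval_eq_game (v := fun S => (i \in S)%:R - (ord_max \in S)%:R)).
- move=> s; rewrite ffunE contains_lastE.
  by case: (i \in _); case: (ord_max \in _); rewrite ?subr0 ?sub0r ?subrr.
- by rewrite !in_set0 subrr.
- by rewrite !in_setT subrr.
Qed.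

Lemma balanced_sum_w B lam i :
  balancing_weights B lam -> balanced_sum B lam 0 (w R i) = 0.
Proof.
move=> [_ lam1]; rewrite /balanced_sum.
under eq_bigr => S _ do rewrite gval_w mulrBr !mulr_natr !mulrb.
by rewrite sumrB -!big_mkcondr !lam1 subrr.
Qed.

Lemma gval_w_set1 (i k : 'I_m) :
  gval 0 (w R (player_lt_n (n:=m.+1) i)) [set player_lt_n (n:=m.+1) k] =
  (i == k)%:R.
Proof.
by rewrite gval_w !in_set1 -!val_eqE /= val_eqE gtn_eqF ?subr0.
Qed.

Lemma lin_indep_w : lin_indep (fun i : 'I_m => w R (player_lt_n (n:=m.+1) i)).
Proof.
move=> c sum0 k.
have := congr1 (fun x => gval 0 x [set player_lt_n (n:=m.+1) k]) sum0.
rewrite /= gval0_sum gval00 (bigD1 k) //= big1 => [|i neq_ik].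
  by rewrite gval_w_set1 eqxx mulr1 addr0.
by rewrite gval_w_set1 (negbTE neq_ik) mulr0.
Qed.

Lemma sum_in_of_sum0 (a : 'I_m.+1 -> R) S : \sum_i a i = 0 ->
  \sum_(i in S) a i = \sum_(k < m) a (player_lt_n (n:=m.+1) k) *
    ((player_lt_n (n:=m.+1) k \in S)%:R - (ord_max \in S)%:R).
Proof.
have lt_nE k : player_lt_n (n:=m.+1) k = widen_ord (leqnSn m) k.
  exact: val_inj.
rewrite big_ord_recr /= => sum0.
have a_max : a ord_max = - \sum_(k < m) a (widen_ord (leqnSn m) k).
  by apply/eqP; rewrite -addr_eq0 addrC sum0.
rewrite big_mkcond big_ord_recr /=.
under [RHS]eq_bigr => k _ do rewrite lt_nE mulrBr.
rewrite sumrB -mulr_suml a_max; congr (_ + _).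
  by apply: eq_bigr => k _; case: (_ \in S); rewrite ?mulr1 ?mulr0.
by case: (_ \in S); rewrite ?mulr1 ?mulr0 ?subr0 ?oppr0 // sub0r.
Qed.

Lemma Mset0_span_w d : Mset 0 d ->
  d = \sum_(k < m) gval 0 d [set player_lt_n (n:=m.+1) k] *:
        w R (player_lt_n (n:=m.+1) k).
Proof.
move=> /[dup] -[sum0 _] /Mset_additive addd; apply/ffunP => s.
rewrite -(gval_coord 0 d s) -(gval_coord 0 (\sum_k _ *: _) s) gval0_sum addd.
by rewrite (sum_in_of_sum0 _ sum0); apply: eq_bigr => k _; rewrite gval_w.
Qed.

End AtLeastOnePlayer.

Section AtLeastTwoPlayers.
Variables (R : realType) (m : nat).
Implicit Types (al t : R) (x d : gvec R m.+2) (S : {set 'I_m.+2}).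

Lemma set1_neqT (i : 'I_m.+2) : [set i] != setT.
Proof.
have [j neq_ji] : exists j : 'I_m.+2, j != i.
  have [->|neq_i0] := eqVneq i ord0; last by exists ord0; rewrite eq_sym.
  by exists ord_max.
by apply/eqP => /setP/(_ j); rewrite !inE (negbTE neq_ji).
Qed.

Lemma singletons_Bstar : Bstar R [set [set i] | i in [set: 'I_m.+2]].
Proof.
apply: partition_Bstar; first exact: singletons_partition.
by apply/imsetP => -[i _ /eqP]; rewrite eq_sym (negbTE (set1_neqT i)).
Qed.

Lemma coalition_Bstar S : S \proper setT -> (1 < #|S|)%N ->
  Bstar R (S |: [set [set i] | i in ~: S]).
Proof.
move=> properS cardS; apply: partition_Bstar.
  by apply: coalition_partition; rewrite -card_gt0 ltnW.
apply/setU1P => -[TS|/imsetP[i _ /eqP]].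
  by move: properS; rewrite -TS properxx.
by rewrite eq_sym (negbTE (set1_neqT i)).
Qed.

Lemma Mset_of_balanced_sums al x :
  (forall B lam, Bstar R B -> balancing_weights B lam ->
     balanced_sum B lam al x = al) ->
  Mset al x.
Proof.
move=> bsum; split.
  rewrite -[RHS](bsum _ _ singletons_Bstar
    (partition_balancing_weights R (singletons_partition _))).
  by rewrite balanced_sum_singletons; apply: eq_bigl => i; rewrite inE.
move=> S properS cardS; have S0 : S != set0 by rewrite -card_gt0 ltnW.
rewrite -[RHS](bsum _ _ (coalition_Bstar properS cardS)
  (partition_balancing_weights R (coalition_partition S0))).
by rewrite balanced_sum_coalition.
Qed.

Lemma lineality_Mset0 al d : lineality (BG al) d -> Mset 0 d.
Proof.
move=> lin; have x0M := equal_split_Mset m.+1 al.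
have BG_x0_d t := (BG_translateE _ x0M).1 (lin _ t (Mset_BG x0M)).
apply: Mset_of_balanced_sums => B lam BB w_lam; apply/le_anti/andP; split.
  by have := BG_x0_d 1 B BB lam w_lam; rewrite balanced_sum0Z mul1r.
by have := BG_x0_d (-1) B BB lam w_lam; rewrite balanced_sum0Z mulN1r oppr_le0.
Qed.

Lemma lineality_BGE al d : lineality (BG al) d <->
  exists c : 'I_m.+1 -> R,
    d = \sum_(i < m.+1) c i *: w R (player_lt_n (n:=m.+2) i).
Proof.
split=> [/lineality_Mset0/Mset0_span_w ->|[c ->]]; first by eexists.
apply: lineality_of_balanced_sum0 => B lam w_lam.
by rewrite balanced_sum0_sum big1 // => i _; rewrite balanced_sum_w ?mulr0.
Qed.

Lemma Mset_of_BG_line al x0 x t : Mset al x0 -> t < 0 -> BG al x ->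
  BG al ((1 - t) *: x0 + t *: x) -> Mset al x.
Proof.
move=> x0M t_lt0 BGx BGy; apply: Mset_of_balanced_sums => B lam BB w_lam.
apply/le_anti/andP; split; first exact: BGx.
have := BGy B BB lam w_lam; rewrite -/(balanced_sum _ _ _ _) balanced_sum_comb.
rewrite (Mset_balanced_sum x0M w_lam) mulrBl mul1r -addrA gerDl addrC => tL_le.
by rewrite -subr_ge0 -(nmulr_rle0 _ t_lt0) mulrBr.
Qed.

Lemma Mset_maximal al (A : gvec R m.+2 -> Prop) : is_affine_subspace A ->
  (forall x, Mset al x -> A x) -> (forall x, A x -> BG al x) ->
  forall x, A x -> Mset al x.
Proof.
move=> [_ affA] MA ABG x Ax; have x0M := equal_split_Mset m.+1 al.
have Ay := affA _ _ (-1) (MA _ x0M) Ax.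
exact: Mset_of_BG_line x0M (ltrN10 R) (ABG _ Ax) (ABG _ Ay).
Qed.

End AtLeastTwoPlayers.

Unset Implicit Arguments.

Theorem theorem5 (R : realType) (n : nat) (alpha : R) (hn : (2 <= n)%N) :
  (* BG_alpha(n) is an affine cone ... *)
  is_affine_cone (BG (n:=n) alpha)
  (* ... of dimension 2^n - 2 (the ambient space has #|gcoord n| = 2^n - 2
     coordinates and BG contains 2^n - 1 affinely independent points) ... *)
  /\ #|gcoord n| = (2 ^ n - 2)%N
  /\ (exists (x0 : gvec R n) (b : 'I_(2 ^ n - 2) -> gvec R n),
        BG (n:=n) alpha x0 /\ (forall k, BG (n:=n) alpha (x0 + b k)) /\ lin_indep b)
  (* ... which is not pointed; *)
  /\ (exists d : gvec R n, d != 0 /\ lineality (BG (n:=n) alpha) d)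
  (* its lineality space has basis (w_i)_{i in N \ {n}} (dimension n - 1); *)
  /\ lin_indep (fun i : 'I_n.-1 => w R (player_lt_n i))
  /\ (forall d : gvec R n, lineality (BG (n:=n) alpha) d <->
        exists c : 'I_n.-1 -> R, d = \sum_(i < n.-1) c i *: w R (player_lt_n i))
  (* the set Mset is an affine subspace contained in BG_alpha(n),
     maximal (w.r.t. inclusion) among affine subspaces contained in it,
     and consists of apexes of the affine cone BG_alpha(n). *)
  /\ is_affine_subspace (Mset (n:=n) alpha)
  /\ (forall x, Mset (n:=n) alpha x -> BG (n:=n) alpha x)
  /\ (forall A : gvec R n -> Prop, is_affine_subspace A ->
        (forall x, Mset (n:=n) alpha x -> A x) -> (forall x, A x -> BG (n:=n) alpha x) ->
        forall x, A x -> Mset (n:=n) alpha x)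
  /\ (forall x, Mset (n:=n) alpha x -> is_apex (BG (n:=n) alpha) x).
Proof.
case: n hn => [|[|m]] // _.
have x0M := equal_split_Mset m.+1 alpha.
split; first exact: apex_affine_cone (Mset_apex x0M).
split; first exact: card_gcoord.
split.
  pose f k := enum_val (cast_ord (esym (card_gcoord m.+1)) k).
  exists (equal_split m.+1 alpha), (fun k => - delta R (f k)).
  split; first exact: Mset_BG.
  split; first by move=> k; apply: BG_sub_delta.
  by apply/lin_indepN/lin_indep_delta => k1 k2 /enum_val_inj/cast_ord_inj.
split.
  exists (w R (player_lt_n (n:=m.+2) ord0)).
  split; first exact: lin_indep_neq0 _ (@lin_indep_w R m.+1).
  by apply: lineality_of_balanced_sum0 => B lam; apply: balanced_sum_w.
split; first exact: lin_indep_w.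
split; first exact: lineality_BGE.
split; first exact: Mset_affine_subspace.
split; first exact: Mset_BG.
split; first exact: Mset_maximal.
exact: Mset_apex.
Qed.
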